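(* Assume only upper-bound group constraints and $\mathcal S\neq\emptyset$. Let $\lambda:\mathcal U\to\mathbb R$. There exists a probability distribution $D$ over $\mathcal S$ with $D[u]\ge\lambda_u$ for all $u\in\mathcal U$ if and only if $$\max_{r\in\mathcal S}\sum_{u\in X}V(r,u)\ \ge\ \sum_{u\in X}\lambda_u\qquad\text{for all } X\subseteq\mathcal U.$$
   Context: Ranking setting: $\mathcal U=\{u_1,\dots,u_n\}$ finite set of individuals partitioned into groups $C_1,\dots,C_t$; rankings are bijections $r:\mathcal U\to[n]$. Only upper bounds: $\mathcal S=\{r:\ |\{u\in C_k: r(u)\le i\}|\le u_i^k\ \forall i\in[n],k\in[t]\}$ for given integers $u_i^k$. $V(r,u)=f(r(u))-g(u)$ with $f:[n]\to\mathbb R$ non-increasing and $g:\mathcal U\to\mathbb R$ arbitrary. For a distribution $D$ over $\mathcal S$, $D[u]=\mathbb E_{r\sim D}[V(r,u)]$. *)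

From HB Require Import structures.
From mathcomp Require Import all_boot all_order all_algebra.
From mathcomp Require Import reals.
Set Implicit Arguments. Unset Strict Implicit. Unset Printing Implicit Defensive.
Import Order.TTheory GRing.Theory Num.Theory.
Local Open Scope ring_scope.

(* A ranking is a bijection U -> [n]; we represent it as a finite function
   r : U -> 'I_#|U| that is injective (hence bijective by cardinality);
   the rank of u (in 1..n) is (r u).+1. *)
Definition ranking (U : finType) := {ffun U -> 'I_#|U|}.

Definition is_ranking (U : finType) (r : ranking U) : bool := injectiveb r.

Definition rank (U : finType) (r : ranking U) (u : U) : nat := (r u).+1.

(* Groups C_1..C_t given by grp : U -> 'I_t; upper bounds ub i k = u_i^k.
   S = rankings with |{u in C_k : r(u) <= i}| <= u_i^k for all i in [n], k. *)
Definition in_S (U : finType) (t : nat) (grp : U -> 'I_t) (ub : nat -> 'I_t -> int)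
  (r : ranking U) : bool :=
  is_ranking r &&
  [forall i : 'I_#|U|, forall k : 'I_t,
     (#|[set u | (grp u == k) && (rank r u <= i.+1)%N]|%:Z <= ub i.+1 k)%R].

Definition V (R : realType) (U : finType) (f : nat -> R) (g : U -> R)
  (r : ranking U) (u : U) : R := f (rank r u) - g u.

Definition is_distr_on_S (R : realType) (U : finType) (S : pred (ranking U))
  (D : {ffun ranking U -> R}) : Prop :=
  (forall r, 0 <= D r) /\ (forall r, ~~ S r -> D r = 0) /\ (\sum_r D r = 1).

Definition expV (R : realType) (U : finType) (f : nat -> R) (g : U -> R)
  (D : {ffun ranking U -> R}) (u : U) : R := \sum_r D r * V f g r u.

(* The forward implication is averaging over D.  Conversely, by the theorem of the
   alternative for matrix games (proved below by Fourier-Motzkin elimination) it is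
   enough that every weighting w >= 0 of the individuals admits some r in S with
   sum_u w_u (V(r,u) - lambda_u) >= 0.  Take r in S minimising sum_u w_u r(u).
   An exchange argument shows that every prefix of r contains at least as many
   members of each layer {u | w_u >= th} as the same prefix of any other ranking of
   S; as f is non-increasing, r then maximises sum_{u in layer} f(r(u)) over S, so
   the hypothesis applied to the layers gives the inequality on each layer, and the
   layer-cake decomposition of sum_u w_u a_u adds these up. *)

From HB Require Import structures.
From mathcomp Require Import all_boot all_order all_algebra reals perm.
From mathcomp Require Import ring lra zify.
Set Implicit Arguments. Unset Strict Implicit. Unset Printing Implicit Defensive.
Import Order.TTheory GRing.Theory Num.Theory.
Local Open Scope ring_scope.

Section Alternative.
Variable R : realFieldType.

Definition is_prob (J : finType) (P : pred J) (c : J -> R) :=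
  [/\ forall j, 0 <= c j, forall j, ~~ P j -> c j = 0 & \sum_j c j = 1].

Definition pointmass (J : finType) (j i : J) : R := (i == j)%:R.

Lemma sum_pointmass (J : finType) (j : J) (F : J -> R) :
  \sum_i pointmass j i * F i = F j.
Proof.
rewrite (bigD1 j) //= big1 /pointmass ?eqxx ?mul1r ?addr0 // => i /negbTE ->.
by rewrite mul0r.
Qed.

Lemma sum_prob_mulr (J : finType) (P : pred J) (c : J -> R) (F : J -> R) :
  is_prob P c -> (forall j, P j -> F j = 1) -> \sum_j c j * F j = 1.
Proof.
move=> [_ c0 c1] F1; rewrite -c1; apply: eq_bigr => j _.
by case: (boolP (P j)) => [/F1 ->|/c0 ->]; rewrite ?mulr1 ?mul0r.
Qed.

Lemma pointmass_prob (J : finType) (P : pred J) (j : J) :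
  P j -> is_prob P (pointmass j).
Proof.
move=> Pj; split; first by move=> i; rewrite ler0n.
  by move=> i; apply: contraNeq; rewrite pnatr_eq0 eqb0 negbK => /eqP ->.
by have := sum_pointmass j (fun=> 1); under eq_bigr do rewrite mulr1.
Qed.

Lemma sum_mixture (J J' : finType) (c : J' -> R) (d : J' -> J -> R) (F : J -> R) :
  \sum_i (\sum_j' c j' * d j' i) * F i = \sum_j' c j' * \sum_i d j' i * F i.
Proof.
under eq_bigr do rewrite mulr_suml.
rewrite exchange_big; apply: eq_bigr => j' _.
by rewrite mulr_sumr; apply: eq_bigr => i _; rewrite mulrA.
Qed.

Lemma mixture_prob (J J' : finType) (P : pred J) (P' : pred J')
    (c : J' -> R) (d : J' -> J -> R) :
  is_prob P' c -> (forall j', P' j' -> is_prob P (d j')) ->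
  is_prob P (fun i => \sum_j' c j' * d j' i).
Proof.
move=> cP dP; have [c0 cP0 _] := cP.
have term0 i j' : ~~ P' j' -> c j' * d j' i = 0 by move/cP0 ->; rewrite mul0r.
split.
- move=> i; apply: sumr_ge0 => j' _.
  case: (boolP (P' j')) => [/dP[d0 _ _]|/term0->//]; exact: mulr_ge0.
- move=> i Pi; apply: big1 => j' _.
  case: (boolP (P' j')) => [/dP[_ d0 _]|/term0->//]; by rewrite d0 ?mulr0.
- rewrite exchange_big /=; under eq_bigr do rewrite -mulr_sumr.
  by apply: sum_prob_mulr cP _ => j' /dP[].
Qed.

Lemma exists_strict_between (J : finType) (Pa Pb : pred J) (a b : J -> R) :
  (forall j, Pb j -> 0 < b j) -> (forall k j, Pa k -> Pb j -> a k < b j) ->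
  exists x, [/\ 0 <= x, forall k, Pa k -> a k < x & forall j, Pb j -> x < b j].
Proof.
move=> b0 ab.
pose M := \big[Order.max/0]_(k | Pa k) a k.
pose m := \big[Order.min/1]_(j | Pb j) (b j - M).
have M0 : 0 <= M by apply: bigmax_ge_id.
have m0 : 0 < m.
  apply: lt_bigmin => // j Pj; rewrite subr_gt0.
  by apply: bigmax_lt => [|k Pk]; [exact: b0 | exact: ab].
exists (M + m / 2); split; first by lra.
- move=> k Pk; have : a k <= M by apply: le_bigmax_cond.
  lra.
- move=> j Pj; have : m <= b j - M by apply: bigmin_le_cond.
  lra.
Qed.

Section FourierMotzkin.
Variables (U J : finType) (P : pred J) (A : J -> U -> R) (u0 : U).

(* Eliminating column [u0]: the new pure strategies are the old ones that are
   nonnegative on [u0] ([inl j]) and, for [j] positive and [k] negative on [u0],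
   the mixture of [j] and [k] that vanishes on [u0] ([inr (j, k)]). *)
Definition fm_strategy := (J + J * J)%type.

Definition fm_comb (j k : J) (F : J -> R) : R :=
  (A j u0 * F k - A k u0 * F j) / (A j u0 - A k u0).

Definition fm_mix (s : fm_strategy) (i : J) : R :=
  match s with
  | inl j => pointmass j i
  | inr (j, k) => fm_comb j k (fun l => pointmass l i)
  end.

Definition fm_support (s : fm_strategy) : bool :=
  match s with
  | inl j => P j && (0 <= A j u0)
  | inr (j, k) => [&& P j, P k, 0 < A j u0 & A k u0 < 0]
  end.

Definition fm_payoff (s : fm_strategy) (u : U) : R := \sum_i fm_mix s i * A i u.

Lemma sum_fm_mix (s : fm_strategy) (F : J -> R) :
  \sum_i fm_mix s i * F i =
    match s with inl j => F j | inr (j, k) => fm_comb j k F end.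
Proof.
case: s => [j|[j k]]; first exact: sum_pointmass.
rewrite /fm_comb; under eq_bigr do rewrite mulrAC mulrBl -!mulrA.
by rewrite -mulr_suml sumrB -!mulr_sumr !sum_pointmass.
Qed.

Lemma fm_payoff_u0_ge0 (s : fm_strategy) : fm_support s -> 0 <= fm_payoff s u0.
Proof.
rewrite /fm_payoff sum_fm_mix; case: s => [j /andP[]//|[j k] _].
by rewrite /fm_comb [A k u0 * _]mulrC subrr mul0r.
Qed.

Lemma fm_mix_prob (s : fm_strategy) : fm_support s -> is_prob P (fm_mix s).
Proof.
case: s => [j /andP[Pj _]|[j k] /and4P[Pj Pk Aj Ak]]; first exact: pointmass_prob.
have pm0 (l i : J) : 0 <= pointmass l i by rewrite ler0n.
split.
- move=> i; apply: divr_ge0; last by lra.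
  by rewrite -mulNr addr_ge0 // mulr_ge0 // ?oppr_ge0 ltW.
- move=> i Pi; have [ij ik] : i != j /\ i != k by split; apply: contraNneq Pi => ->.
  by rewrite /= /fm_comb /pointmass (negbTE ij) (negbTE ik) !mulr0 subrr mul0r.
- have := sum_fm_mix (inr (j, k)) (fun=> 1); under eq_bigr do rewrite mulr1.
  by move=> ->; rewrite /fm_comb !mulr1 divff // subr_eq0 gt_eqF // (lt_trans Ak).
Qed.

Lemma sum_fm_payoff (X : {set U}) (w : U -> R) (s : fm_strategy) :
  \sum_(u in X) w u * fm_payoff s u =
    \sum_i fm_mix s i * \sum_(u in X) w u * A i u.
Proof.
under eq_bigr do rewrite /fm_payoff mulr_sumr.
rewrite exchange_big /=; apply: eq_bigr => i _.
by rewrite mulr_sumr; apply: eq_bigr => u _; rewrite mulrCA.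
Qed.

Lemma fm_response (X : {set U}) : u0 \in X ->
  (forall w : U -> R, (forall u, 0 <= w u) ->
     exists2 j, P j & 0 <= \sum_(u in X) w u * A j u) ->
  forall w : U -> R, (forall u, 0 <= w u) ->
    exists2 s, fm_support s & 0 <= \sum_(u in X :\ u0) w u * fm_payoff s u.
Proof.
move=> Xu0 respond w w0.
pose fits s := fm_support s && (0 <= \sum_(u in X :\ u0) w u * fm_payoff s u).
case: (boolP [exists s, fits s]); first by case/existsP => s /andP[]; exists s.
rewrite negb_exists => /forallP no_response.
pose L i := \sum_(u in X :\ u0) w u * A i u.
have Lneg s : fm_support s ->
    match s with inl j => L j | inr (j, k) => fm_comb j k L end < 0.
  move=> Ps; have := no_response s; rewrite /fits Ps /= -ltNge sum_fm_payoff.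
  by rewrite (sum_fm_mix s L).
have Lpair k j : P k && (A k u0 < 0) -> P j && (0 < A j u0) ->
    L k / - A k u0 < - L j / A j u0.
  move=> /andP[Pk Ak] /andP[Pj Aj]; have := Lneg (inr (j, k)).
  rewrite /= Pj Pk Aj Ak /fm_comb pmulr_llt0 ?invr_gt0 ?subr_gt0 ?(lt_trans Ak) //.
  rewrite ltr_pdivrMr ?oppr_gt0 // mulrAC ltr_pdivlMr //; lra.
have Lnonneg_col j : P j -> 0 <= A j u0 -> L j < 0.
  by move=> Pj Aj; have := Lneg (inl j); rewrite /= Pj Aj; apply.
have bpos j : P j && (0 < A j u0) -> 0 < - L j / A j u0.
  by case/andP => Pj Aj; rewrite divr_gt0 // oppr_gt0 Lnonneg_col // ltW.
have [x [x0 below above]] := exists_strict_between bpos Lpair.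
pose w' u := if u == u0 then x else w u.
have w'0 u : 0 <= w' u by rewrite /w'; case: eqP.
have [j Pj] := respond w' w'0.
rewrite (bigD1 u0) //= {1}/w' eqxx.
have -> : \sum_(u in X | u != u0) w' u * A j u = L j.
  apply: eq_big => [u|u /andP[_ /negbTE u_u0]]; first by rewrite in_setD1 andbC.
  by rewrite /w' u_u0.
case: (ltgtP (A j u0) 0) => Aj.
- have := below j; rewrite Pj Aj ltr_pdivrMr ?oppr_gt0 // => /(_ isT); lra.
- have := above j; rewrite Pj Aj ltr_pdivlMr // => /(_ isT); lra.
- by rewrite Aj mulr0 add0r; have := Lnonneg_col j Pj; rewrite Aj lexx; lra.
Qed.

End FourierMotzkin.

Lemma prob_mixture_nonneg (U J : finType) (P : pred J) (A : J -> U -> R) (X : {set U}) :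
  (forall w : U -> R, (forall u, 0 <= w u) ->
     exists2 j, P j & 0 <= \sum_(u in X) w u * A j u) ->
  exists c, is_prob P c /\ forall u, u \in X -> 0 <= \sum_j c j * A j u.
Proof.
have [n] := ubnP #|X|; elim: n => // n IH in J P A X *.
move=> cardX respond; case: (set_0Vmem X) => [->|[u0 Xu0]].
  have [j0 Pj0 _] := respond (fun=> 0) (fun=> lexx 0).
  by exists (pointmass j0); split; [exact: pointmass_prob | move=> u; rewrite inE].
have cardX' : (#|X :\ u0| < n)%N by move: cardX; rewrite (cardsD1 u0) Xu0.
have [c [cP cX]] := IH _ _ _ _ cardX' (fm_response Xu0 respond).
exists (fun i => \sum_s c s * fm_mix A u0 s i); split.
  by apply: mixture_prob cP _ => s; apply: fm_mix_prob.
move=> u Xu; rewrite sum_mixture.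
case: (eqVneq u u0) => [->|u_u0]; last by apply: cX; rewrite in_setD1 u_u0.
have [c0 c_out _] := cP; apply: sumr_ge0 => s _.
case: (boolP (fm_support P A u0 s)) => [/fm_payoff_u0_ge0|/c_out ->]; last by rewrite mul0r.
exact: mulr_ge0.
Qed.

End Alternative.

Section LayerCake.
Variable R : realFieldType.

Lemma sum_layers (T : finType) (w a : T -> R) (mu : R) :
  (forall u, 0 <= w u) -> (forall u, 0 < w u -> mu <= w u) ->
  \sum_u w u * a u =
    mu * \sum_(u | mu <= w u) a u +
    \sum_u (if mu <= w u then w u - mu else 0) * a u.
Proof.
move=> w0 mu_min; rewrite mulr_sumr [X in _ = X + _]big_mkcond -big_split /=.
apply: eq_bigr => u _; case: ifP => [_|mu_u]; first by ring.
have -> : w u = 0.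
  by apply/eqP; rewrite eq_le w0 andbT leNgt; apply: contraFN mu_u => /mu_min.
by rewrite !mul0r addr0.
Qed.

Lemma layer_cake_ge0 (T : finType) (w a : T -> R) :
  (forall u, 0 <= w u) -> (forall th, 0 <= \sum_(u | th <= w u) a u) ->
  0 <= \sum_u w u * a u.
Proof.
have [n] := ubnP #|[set u | 0 < w u]|; elim: n => // n IH in w *.
move=> card_pos w0 layer0.
case: (set_0Vmem [set u | 0 < w u]) => [pos0|[u1]].
  rewrite big1 // => u _; suff -> : w u = 0 by rewrite mul0r.
  apply/eqP; rewrite eq_le w0 andbT leNgt; apply/negP => wu.
  by have := in_set0 u; rewrite -pos0 inE wu.
rewrite inE => wu1.
case: (@arg_minP _ R T u1 (fun u => 0 < w u) w wu1) => u0 wu0 u0_min.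
set mu := w u0; set w' := fun u => if mu <= w u then w u - mu else 0.
rewrite (sum_layers a w0 u0_min); apply: addr_ge0; first exact: mulr_ge0 (ltW wu0) _.
have w'0 u : 0 <= w' u by rewrite /w'; case: ifP; rewrite ?subr_ge0.
apply: (IH w') => //.
- rewrite -ltnS; apply: (leq_trans _ card_pos); rewrite ltnS.
  apply: proper_card; apply/properP; split.
    apply/subsetP => u; rewrite !inE /w'; case: ifP; last by rewrite ltxx.
    by move=> _; rewrite subr_gt0; exact: lt_trans.
  by exists u0; rewrite !inE // /w' lexx subrr ltxx.
- move=> th; case: (lerP th 0) => th0.
    congr (0 <= _): (layer0 th); apply: eq_bigl => u.
    by rewrite (le_trans th0 (w0 u)) (le_trans th0 (w'0 u)).
  congr (0 <= _): (layer0 (th + mu)); apply: eq_bigl => u.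
  rewrite /w'; case: ifP => [_|/negbT]; first by rewrite lerBrDr.
  by rewrite -ltNge => wu; apply/idP/idP; lra.
Qed.

End LayerCake.

Lemma tail_telescope (R : realFieldType) (f : nat -> R) (n m : nat) :
  (0 < m <= n)%N ->
  f m = f n + \sum_(1 <= j < n) (f j - f j.+1) * (m <= j)%:R.
Proof.
case/andP=> m0 mn; rewrite (@big_cat_nat _ _ _ m) //= big_nat_cond big1; last first.
  by move=> j /andP[/andP[_ jm] _]; rewrite leqNgt jm mulr0.
rewrite add0r (@eq_big_nat _ _ _ m n _ (fun j => f j - f j.+1)); last first.
  by move=> j /andP[mj _]; rewrite mj mulr1.
under eq_bigr do rewrite -opprB.
by rewrite sumrN telescope_sumr //; ring.
Qed.

Lemma card_set_sum (T : finType) (P : pred T) : #|[set x | P x]| = (\sum_x P x)%N.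
Proof.
by rewrite -sum1_card big_mkcond; apply: eq_bigr => x _; rewrite inE; case: (P x).
Qed.

Section Rankings.
Variables (U : finType) (t : nat) (grp : U -> 'I_t) (ub : nat -> 'I_t -> int).

Definition prefix (r : ranking U) (X : {set U}) (i : nat) : {set U} :=
  [set x in X | (r x < i)%N].

Definition group_set (k : 'I_t) : {set U} := [set x | grp x == k].

Lemma in_SP (r : ranking U) :
  reflect (is_ranking r /\ forall k j, (0 < j <= #|U|)%N ->
             #|prefix r (group_set k) j|%:Z <= ub j k)
          (in_S grp ub r).
Proof.
have prefixE k j : prefix r (group_set k) j = [set u | (grp u == k) && (rank r u <= j)%N].
  by apply/setP => u; rewrite !inE.
apply: (iffP andP) => -[r_inj bounds]; split => //.
  move=> k j /andP[j0 jn]; have jn' : (j.-1 < #|U|)%N by rewrite prednK.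
  by have /forallP/(_ k) := (forallP bounds) (Ordinal jn'); rewrite /= prednK // prefixE.
apply/forallP => i; apply/forallP => k.
by rewrite -prefixE; apply: bounds; rewrite /= ltn_ord.
Qed.

Lemma ranking_bij (r : ranking U) : is_ranking r -> bijective r.
Proof. by move/injectiveP=> r_inj; apply: (inj_card_bij r_inj); rewrite card_ord. Qed.

Lemma ranking_at (r : ranking U) (i : nat) : is_ranking r -> (i < #|U|)%N ->
  exists b, r b = i :> nat.
Proof. by move=> /ranking_bij[r' _ rK] iU; exists (r' (Ordinal iU)); rewrite rK. Qed.

Lemma card_prefixS (r : ranking U) (X : {set U}) (i : nat) (b : U) :
  is_ranking r -> r b = i :> nat ->
  #|prefix r X i.+1| = (#|prefix r X i| + (b \in X))%N.
Proof.
move=> /injectiveP r_inj rb.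
have at_i x : (r x < i.+1)%N = (x == b) || (r x < i)%N.
  rewrite ltnS leq_eqVlt; case: (eqVneq x b) => [->|xb]; first by rewrite rb eqxx.
  by rewrite -rb; congr (_ || _); apply: contraNF xb => /eqP/val_inj/r_inj ->.
case Xb: (b \in X).
  have -> : prefix r X i.+1 = b |: prefix r X i.
    apply/setP => x; rewrite !inE at_i andb_orr.
    by case: (eqVneq x b) => [->|_]; rewrite ?Xb ?andbF.
  by rewrite cardsU1 !inE rb ltnn andbF addn1.
rewrite addn0; apply: eq_card => x; rewrite !inE at_i andb_orr.
by case: (eqVneq x b) => [->|_]; rewrite ?Xb ?andbF.
Qed.

Definition swap (r : ranking U) (a b : U) : ranking U := [ffun x => r (tperm a b x)].

Lemma swap_ranking (r : ranking U) (a b : U) : is_ranking r -> is_ranking (swap r a b).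
Proof.
move/injectiveP=> r_inj; apply/injectiveP => x y; rewrite !ffunE => /r_inj.
exact: perm_inj.
Qed.

Lemma card_prefix_swap (r : ranking U) (a b : U) (k : 'I_t) (i : nat) :
  (r b < r a)%N ->
  (#|prefix (swap r a b) (group_set k) i| <=
     #|prefix r (group_set k) i| + [&& grp a == k, grp b != k, r b < i & i <= r a])%N.
Proof.
move=> ba; have ab : a != b by apply: contraTneq ba => ->; rewrite ltnn.
have cardE (s : ranking U) :
    #|prefix s (group_set k) i| = (\sum_x ((grp x == k) && (s x < i)))%N.
  by rewrite -card_set_sum; apply: eq_card => x; rewrite !inE.
rewrite !cardE (reindex_inj (@perm_inj _ (tperm a b))) /=.
under eq_bigr do rewrite ffunE tpermK.
have split2 (F : U -> nat) :
    (\sum_x F x = F a + F b + \sum_(x | (x != a) && (x != b)) F x)%N.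
  rewrite (bigD1 a) //= (bigD1 b) 1?eq_sym //= addnA.
  by congr (_ + _)%N; apply: eq_bigl => x; rewrite andbC.
rewrite split2 [X in (_ <= X + _)%N]split2 tpermL tpermR.
rewrite (eq_bigr (fun x => nat_of_bool ((grp x == k) && (r x < i)%N))); last first.
  by move=> x /andP[xa xb]; rewrite tpermD // eq_sym.
by move: ba; case: (grp a == k); case: (grp b == k) => /=;
  case: (ltnP (r a) i); case: (ltnP (r b) i) => //=; lia.
Qed.

Lemma swap_in_S (r : ranking U) (a b : U) : in_S grp ub r -> (r b < r a)%N ->
  (grp b != grp a -> forall j, (r b < j <= r a)%N ->
     (#|prefix r (group_set (grp a)) j| + 1)%:Z <= ub j (grp a)) ->
  in_S grp ub (swap r a b).
Proof.
move=> /in_SP[r_rank r_bounds] ba room; apply/in_SP; split; first exact: swap_ranking.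
move=> k j jU; have := card_prefix_swap k j ba.
case: (boolP [&& grp a == k, grp b != k, (r b < j)%N & (j <= r a)%N]).
  case/and4P=> /eqP <- gb bj ja le; apply: le_trans (room gb j _); last by rewrite bj.
  by rewrite lez_nat.
by rewrite addn0 => _ le; apply: le_trans (r_bounds k j jU); rewrite lez_nat.
Qed.

Lemma subset_prefix (r : ranking U) (X Y : {set U}) (i j : nat) :
  X \subset Y -> (i <= j)%N -> prefix r X i \subset prefix r Y j.
Proof.
move=> /subsetP XY ij; apply/subsetP => x; rewrite !inE => /andP[/XY -> xi].
exact: leq_trans ij.
Qed.

Lemma card_prefix_by_group (r : ranking U) (X : {set U}) (i : nat) :
  #|prefix r X i| = (\sum_k #|prefix r (X :&: group_set k) i|)%N.
Proof.
rewrite -sum1_card (partition_big grp predT) //=; apply: eq_bigr => k _.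
by rewrite -sum1_card; apply: eq_bigl => x; rewrite !inE andbAC.
Qed.

Lemma promote_in_S (r r' : ranking U) (a b : U) (i : nat) :
  in_S grp ub r -> in_S grp ub r' -> (i < r a)%N -> r b = i :> nat ->
  (forall x, grp x = grp a -> (i < r x)%N -> (r a <= r x)%N) ->
  (#|prefix r (group_set (grp a)) i.+1| < #|prefix r' (group_set (grp a)) i.+1|)%N ->
  in_S grp ub (swap r a b).
Proof.
move=> rS /in_SP[_ r'_bounds] ia rb a_min deficit.
apply: swap_in_S => // [|_ j /andP[bj ja]]; first by rewrite rb.
have same_prefix : prefix r (group_set (grp a)) j = prefix r (group_set (grp a)) i.+1.
  apply/setP => x; rewrite !inE; case: eqP => //= gx.
  case: (ltnP (r x) i.+1) => [xi|ix]; first by apply: leq_trans xi _; rewrite -rb.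
  by apply/negbTE; rewrite -leqNgt (leq_trans ja) // a_min.
rewrite same_prefix addn1; apply: le_trans (r'_bounds _ j _); last first.
  by rewrite (leq_ltn_trans _ bj) //= (leq_trans ja) // ltnW.
rewrite lez_nat; apply: leq_trans deficit _; apply: subset_leq_card.
by apply: subset_prefix; rewrite // -rb.
Qed.

Section MinimalCost.
Variables (R : realFieldType) (w : U -> R).

Definition wcost (r : ranking U) : R := \sum_x w x * (r x)%:R.

Definition layer (th : R) : {set U} := [set u | th <= w u].

Lemma wcost_swap (r : ranking U) (a b : U) : a != b ->
  wcost (swap r a b) = wcost r - (w a - w b) * ((r a)%:R - (r b)%:R).
Proof.
move=> ab; have split2 (F : U -> R) :
    \sum_x F x = F a + F b + \sum_(x | (x != a) && (x != b)) F x.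
  rewrite (bigD1 a) //= (bigD1 b) 1?eq_sym //= addrA.
  by congr (_ + _); apply: eq_bigl => x; rewrite andbC.
rewrite /wcost !split2 !ffunE tpermL tpermR.
rewrite (eq_bigr (fun x => w x * (r x)%:R)); first by ring.
by move=> x /andP[xa xb]; rewrite ffunE tpermD // eq_sym.
Qed.

Variable rs : ranking U.
Hypotheses (rs_S : in_S grp ub rs)
  (rs_min : forall r, in_S grp ub r -> wcost rs <= wcost r).

Lemma swap_heavier_notin_S (a b : U) :
  w b < w a -> (rs b < rs a)%N -> ~~ in_S grp ub (swap rs a b).
Proof.
move=> wba ba; apply/negP => /rs_min.
have ab : a != b by apply: contraTneq wba => ->; rewrite ltxx.
rewrite wcost_swap //.
have : 0 < (w a - w b) * ((rs a)%:R - (rs b)%:R) by rewrite mulr_gt0 // subr_gt0 // ltr_nat.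
lra.
Qed.

Lemma wcost_min_sorted (a b : U) : grp a = grp b -> w b < w a -> (rs a < rs b)%N.
Proof.
move=> gab wba; case: ltngtP => // [ba|/val_inj eq_ab].
  by have := swap_heavier_notin_S wba ba; rewrite swap_in_S // gab eqxx.
have /injectiveP rs_inj : is_ranking rs by case/in_SP: rs_S.
by move: wba; rewrite (rs_inj _ _ eq_ab) ltxx.
Qed.

Lemma layer_deficit_slot (th : R) (r' : ranking U) (g : 'I_t) (i : nat) :
  in_S grp ub r' ->
  (#|prefix rs (layer th :&: group_set g) i.+1| <
     #|prefix r' (layer th :&: group_set g) i.+1|)%N ->
  exists2 b, rs b = i :> nat & b \in layer th.
Proof.
move=> r'S deficit; set X := layer th :&: group_set g in deficit.
have [a0] : exists2 a0, a0 \in X & a0 \notin prefix rs X i.+1.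
  apply/subsetPn; apply: contraTN deficit => /subset_leq_card XP; rewrite -leqNgt.
  by apply: leq_trans XP; apply: subset_leq_card; apply/subsetP => x; rewrite inE => /andP[].
rewrite !inE => /andP[tha0 ga0]; rewrite tha0 ga0 /= -leqNgt => ia0.
pose late x := (grp x == g) && (i < rs x)%N.
have late_a0 : late a0 by apply/andP.
case: (arg_minnP (fun x => nat_of_ord (rs x)) late_a0) => a /andP[/eqP ga ia] a_min.
have tha : th <= w a.
  rewrite leNgt; apply/negP => wa.
  have := wcost_min_sorted (a := a0) (b := a); rewrite ga (eqP ga0).
  by move=> /(_ erefl (lt_le_trans wa tha0)); rewrite ltnNge a_min.
have early_in_layer : prefix rs (group_set g) i.+1 \subset prefix rs X i.+1.
  apply/subsetP => x; rewrite !inE => /andP[gx xi]; rewrite gx xi !andbT leNgt.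
  apply/negP => wx; have := wcost_min_sorted (a := a) (b := x).
  rewrite ga (eqP gx) => /(_ erefl (lt_le_trans wx tha)).
  by move: xi ia; lia.
have rs_rank : is_ranking rs by case/in_SP: rs_S.
have [b rb] := ranking_at rs_rank (ltn_trans ia (ltn_ord (rs a))).
have swapS : in_S grp ub (swap rs a b).
  apply: (promote_in_S rs_S r'S ia rb) => [x gx ix|].
    by apply: a_min; rewrite /late gx ga eqxx.
  rewrite ga; apply: leq_ltn_trans (subset_leq_card early_in_layer) (leq_trans deficit _).
  by apply: subset_leq_card; apply: subset_prefix => //; apply: subsetIr.
exists b => //; rewrite inE (le_trans tha) // leNgt.
by apply: contraTN swapS => wba; apply: swap_heavier_notin_S wba _; rewrite rb.
Qed.

Lemma prefix_layer_dominated (th : R) (r' : ranking U) (i : nat) :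
  in_S grp ub r' -> (#|prefix r' (layer th) i| <= #|prefix rs (layer th) i|)%N.
Proof.
move=> r'S; elim: i => [|i IH].
  by apply: subset_leq_card; apply/subsetP => x; rewrite inE ltn0 andbF.
rewrite leqNgt; apply/negP => deficit.
have [g g_deficit] : exists g, (#|prefix rs (layer th :&: group_set g) i.+1| <
    #|prefix r' (layer th :&: group_set g) i.+1|)%N.
  apply/existsP; apply: contraTT deficit; rewrite negb_exists => /forallP no_def.
  by rewrite -leqNgt !card_prefix_by_group; apply: leq_sum => g _; rewrite leqNgt no_def.
have [b rb b_layer] := layer_deficit_slot r'S g_deficit.
have rs_rank : is_ranking rs by case/in_SP: rs_S.
have r'_rank : is_ranking r' by case/in_SP: r'S.
have [b' rb'] : exists b', r' b' = i :> nat by apply: ranking_at; rewrite // -rb.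
move: deficit; rewrite (card_prefixS _ rs_rank rb) (card_prefixS _ r'_rank rb') b_layer.
by have := leq_b1 (b' \in layer th); move: IH; lia.
Qed.

End MinimalCost.

End Rankings.

Section Payoffs.
Variables (R : realType) (U : finType) (t : nat) (grp : U -> 'I_t).
Variables (ub : nat -> 'I_t -> int) (f : nat -> R).
Hypothesis f_noninc :
  {in [pred i | (0 < i <= #|U|)%N] &, {homo f : i j / (i <= j)%N >-> j <= i}}.

Lemma sum_f_rank (r : ranking U) (X : {set U}) :
  \sum_(u in X) f (rank r u) =
    #|X|%:R * f #|U| + \sum_(1 <= j < #|U|) (f j - f j.+1) * #|prefix r X j|%:R.
Proof.
under eq_bigr => u _ do rewrite (@tail_telescope _ f #|U| (rank r u)) ?ltn_ord //.
rewrite big_split /= sumr_const mulr_natl; congr (_ + _).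
rewrite exchange_big /=; apply: eq_bigr => j _; rewrite -mulr_sumr -natr_sum.
rewrite card_set_sum big_mkcond /=; congr (_ * _%:R); apply: eq_bigr => u _.
by case: (u \in X).
Qed.

Lemma sum_f_rank_le (r r' : ranking U) (X : {set U}) :
  (forall j, #|prefix r X j| <= #|prefix r' X j|)%N ->
  \sum_(u in X) f (rank r u) <= \sum_(u in X) f (rank r' u).
Proof.
move=> dominated; rewrite !sum_f_rank lerD2l; apply: ler_sum_nat => j /andP[j1 jU].
rewrite ler_wpM2l ?ler_nat // subr_ge0; apply: f_noninc => //; rewrite inE /=.
  by rewrite j1 ltnW.
Qed.

Lemma weighted_response (g lambda w : U -> R) :
  (exists r, in_S grp ub r) -> (forall u, 0 <= w u) ->
  (forall X : {set U}, exists2 r, in_S grp ub r &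
     \sum_(u in X) lambda u <= \sum_(u in X) V f g r u) ->
  exists2 r, in_S grp ub r & 0 <= \sum_(u in [set: U]) w u * (V f g r u - lambda u).
Proof.
move=> [r0 r0S] w0 respond.
have [rs rsS rs_min] : exists2 rs, in_S grp ub rs &
    forall r, in_S grp ub r -> wcost w rs <= wcost w r.
  by case: (@arg_minP _ R _ r0 (in_S grp ub) (wcost w) r0S) => rs; exists rs.
exists rs => //; under eq_bigl do rewrite in_setT.
apply: layer_cake_ge0 w0 _ => th.
have layerE (F : U -> R) : \sum_(u | th <= w u) F u = \sum_(u in layer w th) F u.
  by apply: eq_bigl => u; rewrite inE.
have [r rS le_r] := respond (layer w th).
rewrite layerE sumrB subr_ge0; apply: le_trans le_r _.
rewrite /V !sumrB lerD2r; apply: sum_f_rank_le => j.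
exact: (prefix_layer_dominated rsS rs_min th j rS).
Qed.

End Payoffs.

Section Distributions.
Variables (R : realType) (U : finType) (S : pred (ranking U)).

Lemma distr_of_prob (c : ranking U -> R) :
  is_prob S c -> is_distr_on_S S [ffun r => c r].
Proof.
case=> c0 c_out c1; split; first by move=> r; rewrite ffunE.
split; first by move=> r /c_out; rewrite ffunE.
by under eq_bigr do rewrite ffunE.
Qed.

Lemma distr_mean_le_max (D : {ffun ranking U -> R}) (F : ranking U -> R)
    (rm : ranking U) :
  is_distr_on_S S D -> (forall r, S r -> F r <= F rm) -> \sum_r D r * F r <= F rm.
Proof.
move=> [D0 [D_out D1]] rm_max; rewrite -[leRHS]mul1r -D1 mulr_suml.
apply: ler_sum => r _; case: (boolP (S r)) => [/rm_max|/D_out ->]; last by rewrite !mul0r.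
exact: ler_wpM2l.
Qed.

End Distributions.

Lemma sum_expV (R : realType) (U : finType) (f : nat -> R) (g : U -> R)
    (D : {ffun ranking U -> R}) (X : {set U}) :
  \sum_(u in X) expV f g D u = \sum_r D r * \sum_(u in X) V f g r u.
Proof. by rewrite exchange_big /=; apply: eq_bigr => r _; rewrite mulr_sumr. Qed.

Theorem lemma2 (R : realType) (U : finType) (t : nat) (grp : U -> 'I_t)
  (ub : nat -> 'I_t -> int) (f : nat -> R) (g : U -> R) (lambda : U -> R) :
  {in [pred i | (0 < i <= #|U|)%N] &, {homo f : i j / (i <= j)%N >-> j <= i}} ->
  (exists r : ranking U, in_S grp ub r) ->
  (exists D : {ffun ranking U -> R},
      is_distr_on_S (in_S grp ub) D /\ forall u, lambda u <= expV f g D u)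
  <->
  (forall X : {set U},
      exists2 r : ranking U, in_S grp ub r &
        \sum_(u in X) lambda u <= \sum_(u in X) V f g r u).
Proof.
move=> f_noninc S_nonempty; split.
  move=> [D [DS lambda_le]] X; have [r0 r0S] := S_nonempty.
  pose F r := \sum_(u in X) V f g r u.
  case: (@arg_maxP _ R _ r0 (in_S grp ub) F r0S) => rm rmS rm_max.
  exists rm => //; apply: le_trans (ler_sum _ (fun u _ => lambda_le u)) _.
  by rewrite sum_expV; apply: distr_mean_le_max DS _ => r /rm_max.
move=> respond.
have [c [cS c_ge]] := prob_mixture_nonneg
  (fun w w0 => weighted_response f_noninc S_nonempty w0 respond).
exists [ffun r => c r]; split; first exact: distr_of_prob.
move=> u; have [_ _ c1] := cS.
have mean : \sum_r c r * (V f g r u - lambda u) = \sum_r c r * V f g r u - lambda u.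
  by rewrite (eq_bigr _ (fun r _ => mulrBr _ _ _)) sumrB -mulr_suml c1 mul1r.
rewrite -subr_ge0 /expV (eq_bigr (fun r => c r * V f g r u)) => [|r _]; last first.
  by rewrite ffunE.
by rewrite -mean c_ge ?in_setT.
Qed.
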